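(* Let $H$ be a finite simple graph with vertex set $V$. Then $H$ can be obtained from the complete graph on $V$ through a (finite, possibly empty) sequence of erasures if and only if $H$ is a connected chordal graph.
   Context: All graphs are finite, undirected, simple. A graph is chordal if every induced cycle has length three. A facet edge of $G$ is an edge $xy$ such that $\{x,y\}$ is a maximal clique of $G$. An edge of $G$ is exposed if it is contained in a unique maximal clique of $G$ and it is not a facet edge. For graphs $G,H$ on the same vertex set $V$, $H$ is obtained from $G$ through an erasure if $G$ contains an exposed edge $e$ with $H=G-e$ (delete the edge, keep all vertices). *)

From mathcomp Require Import all_boot.
Set Implicit Arguments. Unset Strict Implicit. Unset Printing Implicit Defensive.

Section Graphs.
Variable V : finType.

Definition simple_graph (g : rel V) : Prop :=
  symmetric g /\ irreflexive g.

Definition complete_graph : rel V := fun x y => x != y.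

Definition connected_graph (g : rel V) : Prop :=
  forall x y : V, connect g x y.

(* s = [:: v_0; ...; v_{k-1}] is an induced cycle of length k >= 3:
   distinct vertices, and v_i v_j is an edge iff i, j are cyclically
   consecutive (indices mod k) *)
Definition induced_cycle (g : rel V) (s : seq V) : Prop :=
  [/\ uniq s, 3 <= size s &
      forall i j : 'I_(size s),
        g (tnth (in_tuple s) i) (tnth (in_tuple s) j) =
        (j == i.+1 %% size s :> nat) || (i == j.+1 %% size s :> nat)].

Definition chordal (g : rel V) : Prop :=
  forall s : seq V, induced_cycle g s -> size s = 3.

Definition clique (g : rel V) (S : {set V}) : Prop :=
  forall x y, x \in S -> y \in S -> x != y -> g x y.

Definition maximal_clique (g : rel V) (S : {set V}) : Prop :=
  clique g S /\ forall T : {set V}, clique g T -> S \subset T -> T = S.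

Definition facet_edge (g : rel V) (x y : V) : Prop :=
  g x y /\ maximal_clique g [set x; y].

Definition exposed_edge (g : rel V) (x y : V) : Prop :=
  [/\ g x y,
      exists! S : {set V}, maximal_clique g S /\ x \in S /\ y \in S
    & ~ facet_edge g x y].

Definition erasure (g h : rel V) : Prop :=
  exists x y, exposed_edge g x y /\
    forall u v, h u v = g u v && ([set u; v] != [set x; y]).

Inductive erasure_seq : rel V -> rel V -> Prop :=
| erasure_seq_refl (g h : rel V) : g =2 h -> erasure_seq g h
| erasure_seq_step (g g' h : rel V) :
    erasure g g' -> erasure_seq g' h -> erasure_seq g h.
End Graphs.

From mathcomp Require Import all_boot zify.
From Stdlib Require Import FunctionalExtensionality.
Set Implicit Arguments. Unset Strict Implicit. Unset Printing Implicit Defensive.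

(* An exposed edge xy lies in a maximal clique with a third vertex z, so x z y
   replaces it and erasures keep the graph connected.  A hole (induced cycle of
   length at least 4) created by erasing xy passes through x and y; an x-y arc of
   it of length at least 3 would close up with xy to a hole of the (chordal) graph
   before the erasure, so the hole is a square x z y w.  But the triangles xyz and xyw lie in maximal cliques containing
   xy, which coincide because xy is exposed, so zw is a chord: chordality survives.

   Conversely, in a chordal graph a vertex adjacent to both ends of an induced path
   is adjacent to all of it.  Let H be connected, chordal and not complete, and
   choose a non-edge uv maximising the common neighbourhood N(u) ∩ N(v), which is
   nonempty by connectivity.  N(u) ∩ N(v) is a clique, so in H + uv the edge uv lies
   only in the maximal clique {u, v} ∪ (N(u) ∩ N(v)) and is exposed.  A hole of
   H + uv would contain an induced path u f1 f2 ... v of H of length at least 3,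
   and then N(u) ∩ N(f2) strictly contains N(u) ∩ N(v), contradicting maximality.
   So H + uv is connected and chordal with fewer non-edges, and induction on the
   number of non-edges builds H from the complete graph. *)

Section ChordalErasure.
Variable V : finType.
Implicit Types (g h : rel V) (f c : nat -> V).

Definition induced_path g m f :=
  (forall i j, i <= m -> j <= m -> f i = f j -> i = j) /\
  (forall i j, i <= m -> j <= m -> g (f i) (f j) = (j == i.+1) || (i == j.+1)).

Definition hole g n c :=
  [/\ 4 <= n, (forall i j, i < n -> j < n -> c i = c j -> i = j) &
      (forall i j, i < n -> j < n ->
         g (c i) (c j) = (j == i.+1 %% n) || (i == j.+1 %% n))].

Definition hole_free g := forall n c, ~ hole g n c.

Lemma chordalE g : chordal g <-> hole_free g.
Proof.
split=> [chg n c [n4 c_inj c_adj] | hfg s [s_uniq s3 s_adj]].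
  have : size (mkseq c n) = 3.
    apply: chg; split.
    - rewrite map_inj_in_uniq ?iota_uniq // => i j.
      by rewrite !mem_iota !add0n; apply: c_inj.
    - by rewrite size_mkseq (leq_trans _ n4).
    - move=> i j; rewrite !(tnth_nth (c 0)) /=.
      move: (ltn_ord i) (ltn_ord j); move: (nat_of_ord i) (nat_of_ord j) => a b.
      by rewrite size_mkseq => an bn; rewrite !nth_mkseq //; apply: c_adj.
  by rewrite size_mkseq => n3; rewrite n3 in n4.
case: (ltnP 3 (size s)) => [s4|s_le3]; last by apply/eqP; rewrite eqn_leq s_le3.
case: s s_uniq s3 s4 s_adj => // x0 s s_uniq _ s4 s_adj.
case: (hfg (size (x0 :: s)) (nth x0 (x0 :: s))); split=> // [i j ilt jlt | i j ilt jlt].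
  by move/eqP; rewrite nth_uniq // => /eqP.
by have := s_adj (Ordinal ilt) (Ordinal jlt); rewrite !(tnth_nth x0).
Qed.

Lemma hole_transfer g g' n c : hole g n c ->
  (forall i j, i < n -> j < n -> g (c i) (c j) = g' (c i) (c j)) -> hole g' n c.
Proof. by case=> n4 c_inj c_adj gg'; split=> // i j ilt jlt; rewrite -gg' ?c_adj. Qed.

Lemma induced_path_transfer g g' m f : induced_path g m f ->
  (forall i j, i <= m -> j <= m -> g (f i) (f j) = g' (f i) (f j)) ->
  induced_path g' m f.
Proof. by case=> f_inj f_adj gg'; split=> // i j ilt jlt; rewrite -gg' ?f_adj. Qed.

Lemma induced_path_shift g m f a m' : induced_path g m f -> a + m' <= m ->
  induced_path g m' (fun l => f (a + l)).
Proof.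
case=> f_inj f_adj am; split=> i j ilt jlt.
  by move/f_inj => /(_ _ _)/eqP; rewrite eqn_add2l => /(_ _ _)/eqP; apply; lia.
by rewrite f_adj; lia.
Qed.

Lemma eq_succ_mod n k l : k < n -> 0 < l < n -> (l == k.+1 %% n) = (l == k.+1).
Proof.
move=> kn ln; case: (ltnP k.+1 n) => [kn'|nk]; first by rewrite modn_small.
have -> : k.+1 = n by lia.
by rewrite modnn; lia.
Qed.

Lemma hole_arc g n c a b : hole g n c -> 0 < a -> a <= b < n ->
  induced_path g (b - a) (fun l => c (a + l)).
Proof.
case=> _ c_inj c_adj a_gt0 abn; split=> i j ilt jlt.
  by move/c_inj=> eq_ij; apply/eqP; rewrite -(eqn_add2l a); apply/eqP/eq_ij; lia.
by rewrite c_adj ?(eq_succ_mod, addnS); lia.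
Qed.

Lemma hole_rotate g n c k : hole g n c -> hole g n (fun i => c ((i + k) %% n)).
Proof.
case=> n4 c_inj c_adj; have n_gt0 : 0 < n by lia.
have succ_rot i j : j < n -> ((j + k) %% n == ((i + k) %% n).+1 %% n) = (j == i.+1 %% n).
  by move=> jn; rewrite -addn1 modnDml addn1 -addSn eqn_modDr (modn_small jn).
split=> // i j ilt jlt.
  move/c_inj; rewrite !ltn_pmod // => /(_ isT isT)/eqP.
  by rewrite eqn_modDr !modn_small // => /eqP.
by rewrite c_adj ?ltn_pmod // !succ_rot.
Qed.

Lemma hole_rotate_edge g n c i : hole g n c -> i < n ->
  exists2 c', hole g n c' & c' 0 = c (i.+1 %% n) /\ c' n.-1 = c i.
Proof.
move=> c_hole ilt; exists (fun k => c ((k + i.+1) %% n)); first exact: hole_rotate.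
split=> //; have -> : n.-1 + i.+1 = i + n by lia.
by rewrite modnDr modn_small.
Qed.

Lemma hit_or_avoid n c v : (exists2 i, i < n & c i = v) \/ (forall i, i < n -> c i != v).
Proof.
case: (boolP [exists i : 'I_n, c i == v]) => [/existsP[i /eqP civ]|]; first by left; exists i.
by rewrite negb_exists => /forallP c_ne; right=> i ilt; apply: (c_ne (Ordinal ilt)).
Qed.

Definition common_nbhd g a b := [set w | g a w && g b w].

Section SimpleGraph.
Variable g : rel V.
Hypotheses (gsym : symmetric g) (girr : irreflexive g).

Lemma hole_of_apex m f s : induced_path g m f -> 2 <= m ->
  (forall i, i <= m -> s != f i) -> g s (f 0) -> g s (f m) ->
  (forall i, 0 < i < m -> ~~ g s (f i)) ->
  hole g m.+2 (fun k => if k <= m then f k else s).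
Proof.
case=> f_inj f_adj m2 s_off s0 sm s_mid.
have s_adj i : i <= m -> g s (f i) = (i == 0) || (i == m).
  move=> im; case: (posnP i) => [->|i_gt0]; first by rewrite s0.
  case: (eqVneq i m) => [->|i_ne_m]; first by rewrite sm orbT.
  by rewrite (negbTE (s_mid i _)) ?i_gt0 //; lia.
split=> // i j ilt jlt; case: ifP => im; case: ifP => jm.
- exact: f_inj.
- by move=> fis; move: (s_off i im); rewrite fis eqxx.
- by move=> sfj; move: (s_off j jm); rewrite sfj eqxx.
- lia.
- by rewrite f_adj // !modn_small //; lia.
- have -> : j = m.+1 by lia.
  by rewrite gsym s_adj // modnn modn_small //; lia.
- have -> : i = m.+1 by lia.
  by rewrite s_adj // modnn modn_small //; lia.
- have -> : i = m.+1 by lia.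
  have -> : j = m.+1 by lia.
  by rewrite girr modnn.
Qed.

Lemma hole_free_apex m f s : hole_free g -> induced_path g m f ->
  (forall i, i <= m -> s != f i) -> g s (f 0) -> g s (f m) ->
  forall i, i <= m -> g s (f i).
Proof.
move=> hfg f_path s_off s0 sm i im; apply/negPn/negP => nsi.
have i_gt0 : 0 < i by case: (posnP i) nsi => [->|//]; rewrite s0.
have i_lt_m : i < m by rewrite ltn_neqAle im andbT; apply: contraNneq nsi => ->.
pose before k := (k < i) && g s (f k).
have ex_before : exists k, before k by exists 0; rewrite /before s0 i_gt0.
have before_le k : before k -> k <= i by case/andP=> /ltnW.
case: (ex_maxnP ex_before before_le) => a /andP[ai sa] a_max.
pose after k := [&& i < k, k <= m & g s (f k)].
have ex_after : exists k, after k by exists m; rewrite /after sm i_lt_m leqnn.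
case: (ex_minnP ex_after) => b /and3P[ib bm sb] b_min.
(* s and the segment f a, ..., f b between its neighbours nearest to f i form a hole *)
apply: (hfg (b - a).+2 (fun k => if k <= b - a then f (a + k) else s)).
apply: hole_of_apex => [||l lba|||l /andP[l_gt0 lba]].
- by apply: induced_path_shift f_path _; lia.
- lia.
- by apply: s_off; lia.
- by rewrite addn0.
- by rewrite subnKC ?(ltnW (ltn_trans ai ib)).
- apply/negP => sl; case: (ltngtP (a + l) i) => [ali|ial|ali].
  + by have := a_max (a + l); rewrite /before ali sl => /(_ isT); lia.
  + by have := b_min (a + l); rewrite /after ial sl andbT => /(_ _); lia.
  + by rewrite -ali sl in nsi.
Qed.

Lemma induced_path3 x y z : g x y -> g y z -> ~~ g x z -> x != z ->
  induced_path g 2 (nth x [:: x; y; z]).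
Proof.
move=> xy yz nxz xz; split=> [[|[|[|i]]] [|[|[|j]]] //= _ _ |[|[|[|i]]] [|[|[|j]]] //= _ _].
all: rewrite ?girr ?(gsym y x) ?(gsym z y) ?(gsym z x) ?xy ?yz ?(negbTE nxz) //.
all: by move=> eq_xy; rewrite eq_xy ?girr ?eqxx in xy yz xz.
Qed.

Lemma hole_free_common_nbhd_clique u v : hole_free g -> u != v -> ~~ g u v ->
  clique g (common_nbhd g u v).
Proof.
move=> hfg uv nuv s t; rewrite !inE => /andP[us vs] /andP[ut vt] st.
have usv := induced_path3 us (etrans (gsym s v) vs) nuv uv.
rewrite gsym; apply: (hole_free_apex hfg usv _ _ _ (i := 1)) => //=; rewrite ?(gsym t) //.
case=> [|[|[|i]]] //= _; apply/eqP=> tx.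
- by rewrite tx girr in ut.
- by rewrite tx eqxx in st.
- by rewrite tx girr in vt.
Qed.

Lemma hole_free_path_common_nbhd m f : hole_free g -> induced_path g m f -> 3 <= m ->
  common_nbhd g (f 0) (f m) \proper common_nbhd g (f 0) (f 2).
Proof.
move=> hfg f_path m3; have [f_inj f_adj] := f_path.
rewrite properE; apply/andP; split.
  apply/subsetP=> w; rewrite !inE => /andP[f0w fmw]; rewrite f0w /= gsym.
  apply: (hole_free_apex hfg f_path) => //; rewrite ?(gsym w) //; last by lia.
  move=> i im; apply/eqP=> wfi; rewrite wfi !f_adj // in f0w fmw; lia.
by apply/subsetPn; exists (f 1); rewrite !inE !f_adj //; lia.
Qed.
End SimpleGraph.

Lemma eq_set2 (a b x y : V) : x != y ->
  ([set a; b] == [set x; y]) = (a == x) && (b == y) || (a == y) && (b == x).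
Proof.
move=> xy; apply/eqP/idP => [ab_xy|/orP[]/andP[/eqP-> /eqP->] //]; last exact: setUC.
have := set21 x y; have := set22 x y; rewrite -ab_xy !inE.
case/orP=> /eqP ?; case/orP=> /eqP ?; subst; rewrite ?eqxx ?orbT //;
  by rewrite eqxx in xy.
Qed.

Definition del_edge g x y : rel V := fun a b => g a b && ([set a; b] != [set x; y]).

Definition add_edge g x y : rel V := fun a b => g a b || ([set a; b] == [set x; y]).

Lemma del_edgeE g x y a b : x \notin [set a; b] \/ y \notin [set a; b] ->
  del_edge g x y a b = g a b.
Proof.
rewrite /del_edge; case: eqP => [->|_]; last by rewrite andbT.
by rewrite set21 set22; case.
Qed.

Lemma add_edgeE g x y a b : x \notin [set a; b] \/ y \notin [set a; b] ->
  add_edge g x y a b = g a b.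
Proof.
rewrite /add_edge; case: eqP => [->|_]; last by rewrite orbF.
by rewrite set21 set22; case.
Qed.

Lemma del_edge_simple g x y : simple_graph g -> simple_graph (del_edge g x y).
Proof. by case=> gsym girr; split=> [a b|a]; rewrite /del_edge ?girr // gsym setUC. Qed.

Lemma add_edge_simple g x y : simple_graph g -> x != y -> simple_graph (add_edge g x y).
Proof.
case=> gsym girr xy; split=> [a b|a]; first by rewrite /add_edge gsym setUC.
rewrite /add_edge girr /= eq_set2 //.
by apply/negP=> /orP[]/andP[/eqP ax /eqP ay]; rewrite -ax -ay eqxx in xy.
Qed.

Lemma rel_ext (g h : rel V) : g =2 h -> g = h.
Proof. by move=> gh; do 2!apply: functional_extensionality => ?; apply: gh. Qed.

Lemma del_add_edge g x y : symmetric g -> x != y -> ~~ g x y ->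
  del_edge (add_edge g x y) x y = g.
Proof.
move=> gsym xy nxy; apply: rel_ext => a b; rewrite /del_edge /add_edge.
case: eqP => [/eqP|_]; last by rewrite orbF andbT.
by rewrite eq_set2 // => /orP[]/andP[/eqP-> /eqP->]; rewrite ?(gsym y x) (negbTE nxy).
Qed.

Lemma common_nbhd_set2 g a b x y : x != y -> [set a; b] = [set x; y] ->
  common_nbhd g a b = common_nbhd g x y.
Proof.
move=> xy /eqP; rewrite eq_set2 // => /orP[]/andP[/eqP-> /eqP->] //.
by apply/setP=> w; rewrite !inE andbC.
Qed.

Lemma hole_del_edge g x y n c :
  (forall i, i < n -> c i != x) \/ (forall i, i < n -> c i != y) ->
  hole (del_edge g x y) n c <-> hole g n c.
Proof.
move=> avoid; have agree i j : i < n -> j < n -> del_edge g x y (c i) (c j) = g (c i) (c j).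
  move=> ilt jlt; apply: del_edgeE.
  by case: avoid => c_avoid; [left|right]; rewrite !inE negb_or !(eq_sym _ (c _)) !c_avoid.
by split=> c_hole; apply: hole_transfer c_hole _ => i j ilt jlt; rewrite agree.
Qed.

Lemma hole_drop_edge g n c x y : hole g n c -> [set c 0; c n.-1] = [set x; y] ->
  induced_path (del_edge g x y) n.-1 c.
Proof.
case=> n4 c_inj c_adj ends; split=> [i j ilt jlt|i j ilt jlt]; first by apply: c_inj; lia.
have c_eq k l : k <= n.-1 -> l <= n.-1 -> (c k == c l) = (k == l).
  by move=> kn ln; apply/eqP/eqP => [/c_inj|->] //; apply; lia.
have succ_mod k : k <= n.-1 -> k.+1 %% n = if k == n.-1 then 0 else k.+1.
  move=> kn; case: eqP => [->|kn']; first by rewrite prednK ?modnn //; lia.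
  by rewrite modn_small //; lia.
rewrite /del_edge -ends eq_set2 ?c_eq ?c_adj ?succ_mod //; try lia.
by case: ifP; case: ifP; lia.
Qed.

Definition cliqueb g (S : {set V}) := [forall x in S, forall y in S, (x != y) ==> g x y].

Lemma cliqueP g S : reflect (clique g S) (cliqueb g S).
Proof.
apply: (iffP forall_inP) => [gS x y xS yS|gS x xS].
  by move/forall_inP/(_ y yS)/implyP: (gS x xS).
by apply/forall_inP=> y yS; apply/implyP; apply: gS.
Qed.

Lemma clique_extend g S : clique g S -> exists2 T, maximal_clique g T & S \subset T.
Proof.
move=> /cliqueP gS; pose P T := cliqueb g T && (S \subset T).
have S_ok : P S by rewrite /P gS subxx.
case: (@arg_maxnP _ S P (fun T => #|T|) S_ok) => T /andP[/cliqueP gT ST] T_max.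
exists T => //; split=> // T' /cliqueP gT' TT'; apply/eqP; rewrite eq_sym eqEcard TT'.
by apply: T_max; rewrite /P gT' (subset_trans ST TT').
Qed.

Lemma clique_set3 g x y z : symmetric g -> g x y -> g x z -> g y z ->
  clique g [set x; y; z].
Proof.
move=> gsym xy xz yz a b; rewrite !inE => /orP[/orP[]|] /eqP-> /orP[/orP[]|] /eqP->;
  by rewrite ?eqxx // gsym.
Qed.

Lemma greatest_clique_unique g C x y : clique g C -> x \in C -> y \in C ->
  (forall T, clique g T -> x \in T -> y \in T -> T \subset C) ->
  exists! S, maximal_clique g S /\ x \in S /\ y \in S.
Proof.
move=> gC xC yC C_max; exists C; split.
  split=> //; split=> // T gT CT; apply/eqP; rewrite eqEsubset CT andbT.
  by apply: C_max; rewrite ?(subsetP CT).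
by move=> T [[gT T_max] [xT yT]]; apply: T_max => //; apply: C_max.
Qed.

Section ExposedEdge.
Variables (g : rel V) (x y : V).
Hypotheses (gsym : symmetric g) (girr : irreflexive g) (xy_exposed : exposed_edge g x y).

Lemma exposed_common_nbr : exists z, g x z && g y z.
Proof.
case: xy_exposed => gxy [C [[[gC C_max] [xC yC]] _]] not_facet.
have /subsetPn[z zC] : ~~ (C \subset [set x; y]).
  apply/negP=> Cxy; apply: not_facet; split=> //.
  suff <- : C = [set x; y] by [].
  by apply/eqP; rewrite eqEsubset Cxy; apply/subsetP=> w /set2P[]->.
rewrite !inE negb_or => /andP[zx zy].
by exists z; rewrite !gC // eq_sym.
Qed.

Lemma exposed_common_nbrs_adj z w : g x z -> g y z -> g x w -> g y w -> z != w -> g z w.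
Proof.
move=> xz yz xw yw zw; case: xy_exposed => gxy [C [[[gC _] _] C_uniq]] _.
have on_C u : g x u -> g y u -> u \in C.
  move=> xu yu; have [T T_max /subsetP xyuT] := clique_extend (clique_set3 gsym gxy xu yu).
  by rewrite (C_uniq T) ?xyuT ?inE ?eqxx ?orbT //; split; rewrite ?xyuT ?inE ?eqxx ?orbT.
exact: gC (on_C _ xz yz) (on_C _ xw yw) zw.
Qed.

Lemma exposed_neq : x != y.
Proof. by case: xy_exposed => gxy _ _; apply: contraTneq gxy => ->; rewrite girr. Qed.

Lemma del_exposed_connected : connected_graph g -> connected_graph (del_edge g x y).
Proof.
move=> g_conn; have [hsym _] := del_edge_simple x y (conj gsym girr).
have [z /andP[xz yz]] := exposed_common_nbr.
have zx : z != x by apply: contraTneq xz => ->; rewrite girr.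
have zy : z != y by apply: contraTneq yz => ->; rewrite girr.
have x_to_y : connect (del_edge g x y) x y.
  apply: (@connect_trans _ _ z); apply: connect1; rewrite del_edgeE ?(gsym z) //.
    by right; rewrite !inE negb_or eq_sym exposed_neq eq_sym.
  by left; rewrite !inE negb_or eq_sym zx exposed_neq.
move=> a b; apply: connect_sub (g_conn a b) => c d cd.
case: (boolP ([set c; d] == [set x; y])) => [|cd_xy]; last first.
  by apply: connect1; rewrite /del_edge cd cd_xy.
rewrite eq_set2 ?exposed_neq // => /orP[]/andP[/eqP-> /eqP->] //.
by rewrite (sym_connect_sym hsym).
Qed.

Lemma del_exposed_long_arc n c a b : hole_free g -> hole (del_edge g x y) n c ->
  c 0 = x -> 0 < a -> a.+1 < b < n -> g x (c a) -> g x (c b) -> c a.+1 != y -> False.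
Proof.
move=> hfg c_hole c0 a_gt0 abn xa xb a1y; have [n4 c_inj c_adj] := c_hole.
have c_ne_x i : 0 < i < n -> c i != x.
  by move=> i_mid; rewrite -c0; apply/eqP=> /c_inj; lia.
have arc : induced_path g (b - a) (fun l => c (a + l)).
  apply: induced_path_transfer (hole_arc c_hole _ _) _ => [||i j ilt jlt]; [lia|lia|].
  by apply: del_edgeE; left; rewrite !inE negb_or !(eq_sym x) !c_ne_x //; lia.
have x_a1 : g x (c a.+1).
  rewrite -addn1; apply: (hole_free_apex gsym girr hfg arc); last by lia.
  - by move=> l lba; rewrite eq_sym c_ne_x //; lia.
  - by rewrite addn0.
  - by rewrite subnKC //; lia.
have := c_adj 0 a.+1; rewrite c0 del_edgeE ?x_a1 ?(modn_small (_ : 1 < n)) ?modn_small; try lia.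
by right; rewrite !inE negb_or eq_sym exposed_neq eq_sym.
Qed.

Lemma del_exposed_hole_through_xy n c k : hole_free g -> hole (del_edge g x y) n c ->
  c 0 = x -> k < n -> c k = y -> False.
Proof.
move=> hfg c_hole c0 kn ck; have [n4 c_inj c_adj] := c_hole.
have [gxy _ _] := xy_exposed.
have c_neq i j : i < n -> j < n -> i != j -> c i != c j.
  by move=> ilt jlt; apply: contra_neq => /c_inj; apply.
have x_c1 : del_edge g x y x (c 1).
  by have := c_adj 0 1; rewrite c0 modn_small => [->|]; lia.
have x_cn : del_edge g x y x (c n.-1).
  by have := c_adj 0 n.-1; rewrite c0 prednK ?modnn => [->|]; rewrite ?orbT //; lia.
have [k_gt1 k_lt] : 1 < k /\ k < n.-1.
  have x_ck : del_edge g x y x (c k) = false by rewrite ck /del_edge eqxx andbF.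
  have k0 : k != 0 by apply/eqP=> k0; move: exposed_neq; rewrite -c0 -ck k0 eqxx.
  have k1 : k != 1 by apply/eqP=> k1; rewrite k1 x_c1 in x_ck.
  have kn1 : k != n.-1 by apply/eqP=> kn1; rewrite kn1 x_cn in x_ck.
  lia.
(* Only the square x, c 1, y, c 3 escapes del_exposed_long_arc. *)
case: (ltnP 2 k) => [k3|k_le2].
  apply: (del_exposed_long_arc hfg c_hole c0 (a := 1) (b := k)); rewrite ?ck //; try lia.
    by case/andP: x_c1.
  by rewrite -ck c_neq //; lia.
case: (ltnP k.+1 n.-1) => [k_lt'|k_ge].
  apply: (del_exposed_long_arc hfg c_hole c0 (a := k) (b := n.-1)); rewrite ?ck //; try lia.
    by case/andP: x_cn.
  by rewrite -ck c_neq //; lia.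
have k2 : k = 2 by lia.
have n4' : n = 4 by lia.
subst k n; move: x_c1 x_cn => /andP[x_c1 _] /andP[x_c3 _].
have y_c1 : g y (c 1) by case/andP: (c_adj 2 1 isT isT); rewrite ck.
have y_c3 : g y (c 3) by case/andP: (c_adj 2 3 isT isT); rewrite ck.
have := c_adj 1 3 isT isT; rewrite del_edgeE.
  by rewrite (exposed_common_nbrs_adj x_c1 y_c1 x_c3 y_c3) ?c_neq.
by left; rewrite !inE negb_or -c0 !c_neq.
Qed.

Lemma del_exposed_hole_free : hole_free g -> hole_free (del_edge g x y).
Proof.
move=> hfg n c c_hole; have [n4 _ _] := c_hole.
case: (hit_or_avoid n c x) => [[p pn cp]|avoid_x].
  case: (hit_or_avoid n c y) => [[q qn cq]|avoid_y].
    apply: (del_exposed_hole_through_xy hfg (hole_rotate p c_hole) (k := (q + (n - p)) %% n)).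
    - by rewrite add0n modn_small.
    - by rewrite ltn_pmod //; lia.
    - by rewrite modnDml -addnA subnK ?modnDr ?modn_small // ltnW.
  exact: (hfg n c ((hole_del_edge g (or_intror avoid_y)).1 c_hole)).
exact: (hfg n c ((hole_del_edge g (or_introl avoid_x)).1 c_hole)).
Qed.
End ExposedEdge.

Definition non_edge g (p : V * V) := (p.1 != p.2) && ~~ g p.1 p.2.

Section AddEdge.
Variables (g : rel V) (u v : V).
Hypotheses (gsym : symmetric g) (girr : irreflexive g) (hfg : hole_free g).
Hypotheses (uv : u != v) (nuv : ~~ g u v).

Lemma add_edge_non_edges :
  #|[set p | non_edge (add_edge g u v) p]| < #|[set p | non_edge g p]|.
Proof.
apply: proper_card; rewrite properE; apply/andP; split.
  by apply/subsetP=> [[a b]]; rewrite !inE /non_edge /add_edge /= negb_or => /and3P[-> -> _].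
by apply/subsetPn; exists (u, v); rewrite !inE /non_edge /add_edge /= ?uv ?nuv ?eqxx ?orbT.
Qed.

Lemma add_edge_clique : clique (add_edge g u v) (u |: (v |: common_nbhd g u v)).
Proof.
have [gp_sym _] := add_edge_simple (conj gsym girr) uv.
have gp_uv : add_edge g u v u v by rewrite /add_edge eqxx orbT.
have gp_sub a b : g a b -> add_edge g u v a b by rewrite /add_edge => ->.
have nb_clique := hole_free_common_nbhd_clique gsym girr hfg uv nuv.
move=> a b; rewrite !inE => a_in b_in ab.
case/or3P: a_in => [/eqP au|/eqP av|/andP[ua va]];
  case/or3P: b_in => [/eqP bu|/eqP bv|/andP[ub vb]]; subst.
all: try by rewrite eqxx in ab.
all: rewrite ?(gp_sym v u) //; apply: gp_sub; try by [|rewrite gsym].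
by apply: nb_clique; rewrite // inE ?ua ?ub.
Qed.

Lemma add_edge_exposed : 0 < #|common_nbhd g u v| -> exposed_edge (add_edge g u v) u v.
Proof.
move=> /card_gt0P[w]; rewrite inE => /andP[uw vw].
have gp_uv : add_edge g u v u v by rewrite /add_edge eqxx orbT.
have C_greatest T : clique (add_edge g u v) T -> u \in T -> v \in T ->
    T \subset u |: (v |: common_nbhd g u v).
  move=> gT uT vT; apply/subsetP=> z zT; rewrite !inE.
  case: eqP => [//|/eqP zu]; case: eqP => [//|/eqP zv] /=.
  rewrite -(@add_edgeE g u v u z); last by right; rewrite !inE negb_or !(eq_sym v) uv zv.
  rewrite -(@add_edgeE g u v v z); last by left; rewrite !inE negb_or uv eq_sym zu.
  by rewrite !gT // eq_sym.
split=> //.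
  apply: greatest_clique_unique add_edge_clique _ _ C_greatest; rewrite !inE eqxx ?orbT //.
case=> _ [_ uv_max].
have uv_sub : [set u; v] \subset u |: (v |: common_nbhd g u v).
  by apply/subsetP=> z /set2P[]->; rewrite !inE eqxx ?orbT.
have /setP/(_ w) := uv_max _ add_edge_clique uv_sub.
by rewrite !inE uw vw !orbT => /esym/orP[]/eqP wuv; rewrite wuv girr in uw vw.
Qed.

Lemma add_edge_erasure : 0 < #|common_nbhd g u v| -> erasure (add_edge g u v) g.
Proof.
move=> common_gt0; exists u, v; split; first exact: add_edge_exposed.
by move=> a b; rewrite -[in LHS](del_add_edge gsym uv nuv).
Qed.

Hypothesis uv_max : forall a b, non_edge g (a, b) ->
  #|common_nbhd g a b| <= #|common_nbhd g u v|.

Lemma add_edge_hole_ends n c : hole (add_edge g u v) n c ->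
  [set c 0; c n.-1] = [set u; v] -> False.
Proof.
move=> c_hole ends; have [n4 c_inj _] := c_hole.
have := hole_drop_edge c_hole ends; rewrite del_add_edge // => c_path.
have n3 : 3 <= n.-1 by lia.
have := proper_card (hole_free_path_common_nbhd gsym girr hfg c_path n3).
rewrite (common_nbhd_set2 g uv ends) ltnNge => /negP; apply.
apply: uv_max; rewrite /non_edge (c_path.2 0 2) /= ?andbT; try lia.
by apply/eqP=> /c_inj; lia.
Qed.

Lemma add_edge_hole_free : hole_free (add_edge g u v).
Proof.
move=> n c c_hole; have [_ _ c_adj] := c_hole.
have del_uv := del_add_edge gsym uv nuv.
case: (hit_or_avoid n c u) => [[p pn cp]|avoid_u]; last first.
  by apply: hfg; rewrite -del_uv; apply/(hole_del_edge _ (or_introl avoid_u)).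
case: (hit_or_avoid n c v) => [[q qn cq]|avoid_v]; last first.
  by apply: hfg; rewrite -del_uv; apply/(hole_del_edge _ (or_intror avoid_v)).
have : add_edge g u v (c p) (c q) by rewrite /add_edge cp cq eqxx orbT.
rewrite c_adj // => /orP[]/eqP succ_p.
  have [c' c'_hole [c'0 c'n]] := hole_rotate_edge c_hole pn.
  by apply: (add_edge_hole_ends c'_hole); rewrite c'0 c'n -succ_p cq cp setUC.
have [c' c'_hole [c'0 c'n]] := hole_rotate_edge c_hole qn.
by apply: (add_edge_hole_ends c'_hole); rewrite c'0 c'n -succ_p cq cp.
Qed.
End AddEdge.

Lemma non_edge_common_nbr g a b : symmetric g -> connect g a b -> non_edge g (a, b) ->
  exists2 p, non_edge g p & 0 < #|common_nbhd g p.1 p.2|.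
Proof.
move=> gsym /connectP[s]; elim: s a => [|z s IHs] a /=.
  by move=> _ ->; rewrite /non_edge eqxx.
case/andP=> az z_path b_last; rewrite /non_edge /= => /andP[ab nab].
case: (boolP (g z b)) => [zb|nzb].
  by exists (a, b); rewrite ?/non_edge ?ab ?nab //; apply/card_gt0P; exists z; rewrite inE az gsym.
apply: IHs z_path b_last _; rewrite /non_edge /= nzb andbT.
by apply: contraNneq nab => <-.
Qed.

Lemma erasure_seq_rcons g h h' : erasure_seq g h -> erasure h h' -> erasure_seq g h'.
Proof.
elim=> [g0 h0 /rel_ext-> | g0 g1 h0 g01 _ IH] h0h'; last exact: erasure_seq_step g01 (IH h0h').
exact: erasure_seq_step h0h' (erasure_seq_refl _).
Qed.

Lemma complete_simple : simple_graph (@complete_graph V).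
Proof. by split=> [x y|x]; rewrite /complete_graph ?eqxx // eq_sym. Qed.

Lemma complete_connected : connected_graph (@complete_graph V).
Proof. by move=> x y; case: (eqVneq x y) => [->|xy]; [apply: connect0 | apply: connect1]. Qed.

Lemma complete_hole_free : hole_free (@complete_graph V).
Proof.
move=> n c [n4 c_inj c_adj]; have := c_adj 0 2; rewrite /complete_graph !modn_small; try lia.
by move=> /(_ _ _)/negbFE/eqP/c_inj; lia.
Qed.

Lemma erasure_invariant g h : simple_graph g -> connected_graph g -> hole_free g ->
  erasure g h -> [/\ simple_graph h, connected_graph h & hole_free h].
Proof.
move=> g_simple g_conn hfg [x [y [xy_exposed /rel_ext->]]]; have [gsym girr] := g_simple.
split; first exact: del_edge_simple.
  exact: del_exposed_connected.
exact: del_exposed_hole_free.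
Qed.

Lemma erasure_seq_invariant g h : erasure_seq g h ->
  simple_graph g -> connected_graph g -> hole_free g ->
  [/\ simple_graph h, connected_graph h & hole_free h].
Proof.
elim=> [g0 h0 /rel_ext-> | g0 g1 h0 g01 _ IH] // g0_simple g0_conn hf0.
by have [] := erasure_invariant g0_simple g0_conn hf0 g01.
Qed.

Lemma hole_free_erasure_seq g : simple_graph g -> connected_graph g -> hole_free g ->
  erasure_seq (@complete_graph V) g.
Proof.
have [n] := ubnP #|[set p | non_edge g p]|; elim: n g => // n IH g /ltnSE g_size.
move=> [gsym girr] g_conn hfg.
case: (boolP [exists p, non_edge g p]) => [/existsP[[a b] ab]|]; last first.
  rewrite negb_exists => /forallP complete; apply: erasure_seq_refl => a b.
  case: (eqVneq a b) => [->|ab]; first by rewrite /complete_graph eqxx girr.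
  by have := complete (a, b); rewrite /non_edge /complete_graph /= ab negbK.
have [p0 p0_ne common0] := non_edge_common_nbr gsym (g_conn a b) ab.
case: (arg_maxnP (fun p => #|common_nbhd g p.1 p.2|) p0_ne) => [[u v]] /andP[/= uv nuv] uv_max.
have common_gt0 : 0 < #|common_nbhd g u v| by apply: leq_trans common0 (uv_max _ p0_ne).
apply: erasure_seq_rcons (add_edge_erasure gsym girr hfg uv nuv common_gt0).
apply: IH.
- exact: leq_trans (add_edge_non_edges uv nuv) g_size.
- exact: add_edge_simple.
- by move=> x y; apply: connect_sub (g_conn x y) => c d cd; apply: connect1; rewrite /add_edge cd.
- by apply: add_edge_hole_free => // x y; apply: (uv_max (x, y)).
Qed.
End ChordalErasure.

Theorem theorem2p8 (V : finType) (H : rel V) :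
  simple_graph H ->
  (erasure_seq (@complete_graph V) H <-> connected_graph H /\ chordal H).
Proof.
move=> H_simple; split=> [K_H | [H_conn /chordalE H_hf]]; last exact: hole_free_erasure_seq.
have [_ H_conn H_hf] :=
  erasure_seq_invariant K_H (@complete_simple V) (@complete_connected V) (@complete_hole_free V).
by split; last apply/chordalE.
Qed.
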